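(* Let $n\ge 1$ and let $\mu$ be a locally valid MV assignment of $M_{2,n}$. Let $w_1,w_2,w_3$ be its three locally valid extensions to $M_{2,n+1}$, ordered so that $f(w_1)\ge f(w_2)\ge f(w_3)$, where $f$ denotes the number of flippable faces. If $n=1$, or if $n\ge2$ and $(\mu(e_{3n-4}),\mu(e_{3n-3}),\mu(e_{3n-2}))$ equals $(M,V,M)$ or $(V,M,V)$, then $$(f(w_1)-f(\mu),\,f(w_2)-f(\mu),\,f(w_3)-f(\mu))=(2,0,0).$$ Otherwise $$(f(w_1)-f(\mu),\,f(w_2)-f(\mu),\,f(w_3)-f(\mu))=(2,1,0).$$
   Context: The $2\times n$ Miura-ori $M_{2,n}$ ($n\ge1$) has faces $\alpha_{i,j}$ ($i\in\{1,2\}$, $j\in\{1,\dots,n\}$), interior vertices $x_1,\dots,x_{n-1}$, and creases $e_0$ and $e_{3k-1},e_{3k},e_{3k+1}$ ($k=1,\dots,n-1$). At $x_k$ the creases are left $e_{3k-3}$, top $e_{3k-1}$, right $e_{3k}$, bottom $e_{3k+1}$ (angles adjacent to the left crease obtuse, others acute). Face $\alpha_{1,j}$ is bordered by those of $e_{3j-4}$ (iff $j\ge2$), $e_{3j-3}$, $e_{3j-1}$ (iff $j\le n-1$); $\alpha_{2,j}$ by those of $e_{3j-2}$ (iff $j\ge2$), $e_{3j-3}$, $e_{3j+1}$ (iff $j\le n-1$). An MV assignment $\mu$ maps creases to $\{M,V\}=\{1,-1\}$; it is locally valid if for each $k$ exactly one of $\mu(e_{3k-1}),\mu(e_{3k}),\mu(e_{3k+1})$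 differs from $\mu(e_{3k-3})$. The face flip $\mu_\alpha$ negates $\mu$ on the creases bordering $\alpha$; $\alpha$ is flippable under $\mu$ if $\mu,\mu_\alpha$ are both locally valid. The creases of $M_{2,n+1}$ are those of $M_{2,n}$ plus $e_{3n-1},e_{3n},e_{3n+1}$ around the new vertex $x_n$ (and the faces of column $n$ get new creases); an extension of $\mu$ is a locally valid MV assignment of $M_{2,n+1}$ agreeing with $\mu$ on the creases of $M_{2,n}$. Each locally valid $\mu$ has exactly three extensions. *)

From mathcomp Require Import all_boot all_order all_algebra.
Set Implicit Arguments. Unset Strict Implicit. Unset Printing Implicit Defensive.

Definition MV := bool.
Definition M : MV := true.
Definition V : MV := false.

(* An MV assignment: a map from crease indices to {M,V}; only its values on the
   creases of the pattern under consideration are relevant. *)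
Definition assignment := nat -> MV.

(* creases of M_{2,n}: e_0 and e_{3k-1}, e_{3k}, e_{3k+1} for 1 <= k <= n-1,
   i.e. indices 0 and 2, ..., 3n-2 *)
Definition is_crease (n c : nat) : bool := (c == 0) || ((2 <= c) && (c <= 3 * n - 2)).

(* local validity at vertex x_k: exactly one of top/right/bottom differs from left *)
Definition valid_at (mu : assignment) (k : nat) : bool :=
  ((mu (3 * k - 1) != mu (3 * k - 3)) + (mu (3 * k) != mu (3 * k - 3))
   + (mu (3 * k + 1) != mu (3 * k - 3)) == 1)%N.

Definition locally_valid (n : nat) (mu : assignment) : bool :=
  all (valid_at mu) (iota 1 (n - 1)).

Definition borders (n i j c : nat) : bool :=
  if i == 1 then
    [|| (2 <= j) && (c == 3 * j - 4), c == 3 * j - 3 | (j <= n - 1) && (c == 3 * j - 1)]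
  else
    [|| (2 <= j) && (c == 3 * j - 2), c == 3 * j - 3 | (j <= n - 1) && (c == 3 * j + 1)].

Definition face_flip (n i j : nat) (mu : assignment) : assignment :=
  fun c => if borders n i j c then ~~ mu c else mu c.

Definition flippable (n : nat) (mu : assignment) (i j : nat) : bool :=
  locally_valid n mu && locally_valid n (face_flip n i j mu).

Definition nflip (n : nat) (mu : assignment) : nat :=
  (\sum_(1 <= j < n.+1) (flippable n mu 1 j + flippable n mu 2 j))%N.

Definition agree (n : nat) (mu w : assignment) : Prop :=
  forall c, is_crease n c -> w c = mu c.

Definition extension (n : nat) (mu w : assignment) : Prop :=
  locally_valid n.+1 w /\ agree n mu w.

From mathcomp Require Import all_boot all_order all_algebra zify.
Set Implicit Arguments. Unset Strict Implicit.

(* Flipping the face alpha_(i,j) only changes creases at the vertices x_(j-1)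
   and x_j, so a face in a column j < n of M_(2,n+1) is flippable under an
   extension w of mu exactly when it is flippable under mu.  Hence
   f(w) - f(mu) only depends on the four creases at x_(n-1) and on the three
   new creases at x_n, which form one of the three locally valid patterns
   around x_n; the claim is then a finite check over these Boolean values. *)

Definition vertex_valid (l t r b : MV) : bool :=
  ((t != l) + (r != l) + (b != l) == 1)%N.

Lemma vertex_valid_cases l t r b : vertex_valid l t r b ->
  [\/ (t, r, b) = (~~ l, l, l), (t, r, b) = (l, ~~ l, l) | (t, r, b) = (l, l, ~~ l)].
Proof.
by case: l; case: t; case: r; case: b => //= _;
  first [by constructor 1 | by constructor 2 | by constructor 3].
Qed.

Lemma valid_atE mu k :
  valid_at mu k = vertex_valid (mu (3 * k - 3)) (mu (3 * k - 1)) (mu (3 * k)) (mu (3 * k + 1)).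
Proof. by []. Qed.

Lemma valid_at_pred mu k : (1 <= k)%N ->
  valid_at mu (k - 1) =
  vertex_valid (mu (3 * k - 6)) (mu (3 * k - 4)) (mu (3 * k - 3)) (mu (3 * k - 2)).
Proof.
move=> k_gt0; rewrite valid_atE.
have -> : 3 * (k - 1) - 3 = 3 * k - 6 by lia.
have -> : 3 * (k - 1) - 1 = 3 * k - 4 by lia.
have -> : 3 * (k - 1) + 1 = 3 * k - 2 by lia.
by have -> : 3 * (k - 1) = 3 * k - 3 by lia.
Qed.

Lemma eq_valid_at mu mu' k :
  mu (3 * k - 3) = mu' (3 * k - 3) -> mu (3 * k - 1) = mu' (3 * k - 1) ->
  mu (3 * k) = mu' (3 * k) -> mu (3 * k + 1) = mu' (3 * k + 1) ->
  valid_at mu k = valid_at mu' k.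
Proof. by rewrite !valid_atE => -> -> -> ->. Qed.

Lemma locally_validP n mu :
  reflect (forall k, (0 < k < n)%N -> valid_at mu k) (locally_valid n mu).
Proof.
apply: (iffP allP) => valid_mu k; rewrite ?mem_iota => k_range; apply: valid_mu;
  rewrite ?mem_iota; lia.
Qed.

Ltac simpl_borders :=
  repeat match goal with |- context[borders ?N ?i ?j ?c] =>
    first [ rewrite (_ : borders N i j c = true); last by rewrite /borders /=; lia
          | rewrite (_ : borders N i j c = false); last by rewrite /borders /=; lia ] end.

Lemma valid_at_face_flip_far N i j mu k : (0 < j)%N -> (0 < k)%N -> k != j - 1 -> k != j ->
  valid_at (face_flip N i j mu) k = valid_at mu k.
Proof.
move=> *; apply: eq_valid_at; rewrite /face_flip;
  match goal with |- context[borders N i j ?c] =>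
    have -> // : borders N i j c = false by rewrite /borders; case: (i == 1); lia end.
Qed.

Lemma flippableE N mu i j : (0 < j <= N)%N ->
  flippable N mu i j = [&& locally_valid N mu,
     (j <= 1)%N || valid_at (face_flip N i j mu) (j - 1) &
     (N <= j)%N || valid_at (face_flip N i j mu) j].
Proof.
move=> j_range; rewrite /flippable.
have [valid_mu|] //= := boolP (locally_valid N mu).
apply/locally_validP/andP => [valid_flip | [valid_left valid_right] k k_range].
  by split; case: leqP => //= j_bound; apply: valid_flip; lia.
have [k_left|k_neq_left] := eqVneq k (j - 1).
  by rewrite k_left; move: valid_left; have -> : (j <= 1)%N = false by lia.
have [k_right|k_neq_right] := eqVneq k j.
  by rewrite k_right; move: valid_right; have -> : (N <= j)%N = false by lia.
have /andP[k_gt0 _] := k_range; have /andP[j_gt0 _] := j_range.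
by rewrite valid_at_face_flip_far //; move/locally_validP: valid_mu; apply.
Qed.

Lemma borders_widen n i j : (j < n)%N -> borders n.+1 i j =1 borders n i j.
Proof.
move=> j_lt_n c; rewrite /borders.
have -> : (j <= n.+1 - 1)%N by lia.
by have -> : (j <= n - 1)%N by lia.
Qed.

Lemma valid_at_face_flip_agree n mu w i j k : (0 < k < n)%N -> (j < n)%N -> agree n mu w ->
  valid_at (face_flip n.+1 i j w) k = valid_at (face_flip n i j mu) k.
Proof.
move=> k_range j_lt_n w_mu.
by apply: eq_valid_at; rewrite /face_flip borders_widen // w_mu //; rewrite /is_crease; lia.
Qed.

Lemma flippable_extension n mu w i j : (0 < j < n)%N ->
  locally_valid n mu -> extension n mu w -> flippable n.+1 w i j = flippable n mu i j.
Proof.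
move=> j_range valid_mu [valid_w w_mu].
have flip_agree k : (0 < k < n)%N ->
    valid_at (face_flip n.+1 i j w) k = valid_at (face_flip n i j mu) k.
  by move=> k_range; apply: valid_at_face_flip_agree => //; lia.
have [range_n range_n1] : (0 < j <= n)%N /\ (0 < j <= n.+1)%N by lia.
rewrite !flippableE // valid_w valid_mu /=.
have -> : (n.+1 <= j)%N = false by lia.
have -> : (n <= j)%N = false by lia.
rewrite /= (flip_agree j) //.
by case: (leqP j 1) => //= j_gt1; rewrite (flip_agree (j - 1)) //; lia.
Qed.

(* The arguments [l t r b] are the left, top, right and bottom creases at
   x_(n-1), which does not exist when [leftmost] holds (n = 1); [p q s] are the
   top, right and bottom creases at x_n, whose left crease is [r]. *)
Definition last_column_flips (leftmost : bool) (l t r b : MV) : nat :=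
  (leftmost || vertex_valid l (~~ t) (~~ r) b) + (leftmost || vertex_valid l t (~~ r) (~~ b)).

Definition last_two_columns_flips (leftmost : bool) (l t r b p q s : MV) : nat :=
  ((leftmost || vertex_valid l (~~ t) (~~ r) b) && vertex_valid (~~ r) (~~ p) q s)
  + ((leftmost || vertex_valid l t (~~ r) (~~ b)) && vertex_valid (~~ r) p q (~~ s))
  + vertex_valid r (~~ p) (~~ q) s + vertex_valid r p (~~ q) (~~ s).

Definition inner_flips (n : nat) (mu : assignment) : nat :=
  \sum_(1 <= j < n) (flippable n mu 1 j + flippable n mu 2 j).

Lemma last_column_flipsE n mu : (0 < n)%N -> locally_valid n mu ->
  (flippable n mu 1 n + flippable n mu 2 n =
   last_column_flips (n <= 1) (mu (3 * n - 6)) (mu (3 * n - 4)) (mu (3 * n - 3)) (mu (3 * n - 2)))%N.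
Proof.
move=> n_gt0 valid_mu.
have range_n : (0 < n <= n)%N by lia.
rewrite !flippableE // valid_mu leqnn /= !andbT.
by case: (leqP n 1) => //= n_gt1; rewrite !valid_at_pred //= /face_flip; simpl_borders.
Qed.

Lemma last_two_columns_flipsE n mu w : (0 < n)%N -> extension n mu w ->
  (flippable n.+1 w 1 n + flippable n.+1 w 2 n + flippable n.+1 w 1 n.+1 + flippable n.+1 w 2 n.+1 =
   last_two_columns_flips (n <= 1) (mu (3 * n - 6)) (mu (3 * n - 4)) (mu (3 * n - 3))
     (mu (3 * n - 2)) (w (3 * n - 1)) (w (3 * n)) (w (3 * n + 1)))%N.
Proof.
move=> n_gt0 [valid_w w_mu].
have w_mu_at c : is_crease n c -> w c = mu c by apply: w_mu.
have [range_n range_n1] : (0 < n <= n.+1)%N /\ (0 < n.+1 <= n.+1)%N by lia.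
rewrite !flippableE // valid_w leqnn ltnn /= !andbT.
have -> : n.+1 - 1 = n by lia.
have -> : (n < 1)%N = false by lia.
case: (leqP n 1) => n_le1 /=; rewrite ?valid_at_pred // !valid_atE /face_flip;
  simpl_borders => /=.
  by rewrite w_mu_at //; rewrite /is_crease; lia.
by rewrite !(w_mu_at (3 * n - 6), w_mu_at (3 * n - 4), w_mu_at (3 * n - 3), w_mu_at (3 * n - 2)) //;
  rewrite /is_crease; lia.
Qed.

Lemma nflipE n mu : (0 < n)%N -> locally_valid n mu ->
  nflip n mu = (inner_flips n mu + last_column_flips (n <= 1)
    (mu (3 * n - 6)) (mu (3 * n - 4)) (mu (3 * n - 3)) (mu (3 * n - 2)))%N.
Proof.
move=> n_gt0 valid_mu; rewrite -last_column_flipsE // /nflip /inner_flips.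
by case: n n_gt0 valid_mu => // n _ _; rewrite big_nat_recr.
Qed.

Lemma nflip_extension n mu w : (0 < n)%N -> locally_valid n mu -> extension n mu w ->
  nflip n.+1 w = (inner_flips n mu + last_two_columns_flips (n <= 1)
    (mu (3 * n - 6)) (mu (3 * n - 4)) (mu (3 * n - 3)) (mu (3 * n - 2))
    (w (3 * n - 1)) (w (3 * n)) (w (3 * n + 1)))%N.
Proof.
move=> n_gt0 valid_mu ext_w; rewrite -last_two_columns_flipsE // /nflip /inner_flips.
rewrite big_nat_recr // big_nat_recr //=.
have -> : (\sum_(1 <= j < n) (flippable n.+1 w 1 j + flippable n.+1 w 2 j) =
           \sum_(1 <= j < n) (flippable n mu 1 j + flippable n mu 2 j))%N.
  by apply: eq_big_nat => j j_range; rewrite !(flippable_extension _ j_range valid_mu ext_w).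
lia.
Qed.

Definition extend (n : nat) (mu : assignment) (p q s : MV) : assignment :=
  fun c => if c == 3 * n - 1 then p else if c == 3 * n then q
           else if c == 3 * n + 1 then s else mu c.

Lemma extend_old n mu p q s c : (0 < n)%N -> (c <= 3 * n - 2)%N -> extend n mu p q s c = mu c.
Proof.
move=> n_gt0 c_old; rewrite /extend.
have -> : (c == 3 * n - 1) = false by lia.
have -> : (c == 3 * n) = false by lia.
by have -> : (c == 3 * n + 1) = false by lia.
Qed.

Lemma extension_extend n mu p q s : (0 < n)%N -> locally_valid n mu ->
  vertex_valid (mu (3 * n - 3)) p q s -> extension n mu (extend n mu p q s).
Proof.
move=> n_gt0 valid_mu valid_new; split.
- apply/locally_validP => k k_range; case: (ltnP k n) => k_n.
    have -> : valid_at (extend n mu p q s) k = valid_at mu k.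
      by apply: eq_valid_at; apply: extend_old => //; lia.
    by move/locally_validP: valid_mu; apply; lia.
  have -> : k = n by lia.
  rewrite valid_atE extend_old //; last by lia.
  rewrite /extend !eqxx.
  have -> : (3 * n == 3 * n - 1) = false by lia.
  have -> : (3 * n + 1 == 3 * n - 1) = false by lia.
  by have -> : (3 * n + 1 == 3 * n) = false by lia.
- by move=> c; rewrite /is_crease => c_old; apply: extend_old => //; lia.
Qed.

Lemma extension_new_vertex n mu w : (0 < n)%N -> extension n mu w ->
  vertex_valid (mu (3 * n - 3)) (w (3 * n - 1)) (w (3 * n)) (w (3 * n + 1)).
Proof.
move=> n_gt0 [valid_w w_mu].
rewrite -w_mu; last by rewrite /is_crease; lia.
by rewrite -valid_atE; move/locally_validP: valid_w; apply; lia.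
Qed.

Lemma agree_extensions n mu w1 w2 : extension n mu w1 -> extension n mu w2 ->
  (w1 (3 * n - 1), w1 (3 * n), w1 (3 * n + 1)) = (w2 (3 * n - 1), w2 (3 * n), w2 (3 * n + 1)) ->
  agree n.+1 w1 w2.
Proof.
move=> [_ w1_mu] [_ w2_mu] [new1 new2 new3] c c_crease.
have [c_old|c_new] := boolP (is_crease n c); first by rewrite w1_mu // w2_mu.
have : [|| c == 3 * n - 1, c == 3 * n | c == 3 * n + 1].
  by move: c_crease c_new; rewrite /is_crease; lia.
by case/or3P => /eqP ->.
Qed.

Lemma extensions_exist n mu : (0 < n)%N -> locally_valid n mu ->
  exists w1 w2 w3 : assignment,
    [/\ extension n mu w1, extension n mu w2 & extension n mu w3] /\
    [/\ ~ agree n.+1 w1 w2, ~ agree n.+1 w1 w3 & ~ agree n.+1 w2 w3].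
Proof.
move=> n_gt0 valid_mu; set l := mu (3 * n - 3).
exists (extend n mu (~~ l) l l), (extend n mu l (~~ l) l), (extend n mu l l (~~ l)).
split; first by split; apply: extension_extend => //; rewrite /l; case: (mu _).
have top_crease : is_crease n.+1 (3 * n - 1) by rewrite /is_crease; lia.
have right_crease : is_crease n.+1 (3 * n) by rewrite /is_crease; lia.
have right_ne_top : (3 * n == 3 * n - 1) = false by lia.
split=> same.
- by move: (same _ top_crease); rewrite /extend eqxx; case: (l).
- by move: (same _ top_crease); rewrite /extend eqxx; case: (l).
- by move: (same _ right_crease); rewrite /extend right_ne_top eqxx; case: (l).
Qed.

Lemma valid_at_last n mu : (0 < n)%N -> locally_valid n mu ->
  (n <= 1)%N || vertex_valid (mu (3 * n - 6)) (mu (3 * n - 4)) (mu (3 * n - 3)) (mu (3 * n - 2)).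
Proof.
move=> n_gt0 valid_mu; case: leqP => //= n_gt1.
by rewrite -valid_at_pred //; move/locally_validP: valid_mu; apply; lia.
Qed.

Lemma last_columns_gains (leftmost : bool) (l t r b p1 q1 s1 p2 q2 s2 p3 q3 s3 : MV) :
  let gain := last_two_columns_flips leftmost l t r b in
  let base := last_column_flips leftmost l t r b in
  leftmost || vertex_valid l t r b ->
  vertex_valid r p1 q1 s1 -> vertex_valid r p2 q2 s2 -> vertex_valid r p3 q3 s3 ->
  (p1, q1, s1) != (p2, q2, s2) -> (p1, q1, s1) != (p3, q3, s3) -> (p2, q2, s2) != (p3, q3, s3) ->
  (gain p2 q2 s2 <= gain p1 q1 s1)%N -> (gain p3 q3 s3 <= gain p2 q2 s2)%N ->
  [/\ gain p1 q1 s1 = base + 2, gain p3 q3 s3 = base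
    & gain p2 q2 s2 = base + ~~ [|| leftmost, (t, r, b) == (M, V, M) | (t, r, b) == (V, M, V)]]%N.
Proof.
move=> gain base valid_left; rewrite {}/gain {}/base.
move=> /vertex_valid_cases[] [-> -> ->] /vertex_valid_cases[] [-> -> ->]
        /vertex_valid_cases[] [-> -> ->] //;
  by move: valid_left; case: leftmost; case: l; case: t; case: r; case: b.
Qed.

Local Open Scope int_scope.

Theorem theorem4p2 (n : nat) (mu : assignment) :
  (1 <= n)%N -> locally_valid n mu ->
  (exists w1 w2 w3 : assignment,
      [/\ extension n mu w1, extension n mu w2 & extension n mu w3] /\
      [/\ ~ agree n.+1 w1 w2, ~ agree n.+1 w1 w3 & ~ agree n.+1 w2 w3])
  /\
  (forall w1 w2 w3 : assignment,
      extension n mu w1 -> extension n mu w2 -> extension n mu w3 ->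
      ~ agree n.+1 w1 w2 -> ~ agree n.+1 w1 w3 -> ~ agree n.+1 w2 w3 ->
      (nflip n.+1 w2 <= nflip n.+1 w1)%N -> (nflip n.+1 w3 <= nflip n.+1 w2)%N ->
      let d w := (Posz (nflip n.+1 w) - Posz (nflip n mu))%R in
      if (n == 1%N) ||
         ((2 <= n)%N &&
          (((mu (3 * n - 4)%N, mu (3 * n - 3)%N, mu (3 * n - 2)%N) == (M, V, M)) ||
           ((mu (3 * n - 4)%N, mu (3 * n - 3)%N, mu (3 * n - 2)%N) == (V, M, V))))
      then (d w1, d w2, d w3) = (2%Z, 0%Z, 0%Z)
      else (d w1, d w2, d w3) = (2%Z, 1%Z, 0%Z)).
Proof.
move=> n_gt0 valid_mu; split; first exact: extensions_exist.
move=> w1 w2 w3 ext1 ext2 ext3 ne12 ne13 ne23 le21 le32 d.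
have new_creases_neq wa wb : extension n mu wa -> extension n mu wb -> ~ agree n.+1 wa wb ->
    (wa (3 * n - 1), wa (3 * n), wa (3 * n + 1)) != (wb (3 * n - 1), wb (3 * n), wb (3 * n + 1)).
  by move=> ext_a ext_b ne_ab; apply/eqP => same; apply/ne_ab/(agree_extensions ext_a ext_b).
move: le21 le32; rewrite /d !(nflip_extension n_gt0 valid_mu) // (nflipE n_gt0 valid_mu).
rewrite !leq_add2l => le21 le32.
have [-> -> ->] := last_columns_gains (valid_at_last n_gt0 valid_mu)
  (extension_new_vertex n_gt0 ext1) (extension_new_vertex n_gt0 ext2)
  (extension_new_vertex n_gt0 ext3) (new_creases_neq _ _ ext1 ext2 ne12)
  (new_creases_neq _ _ ext1 ext3 ne13) (new_creases_neq _ _ ext2 ext3 ne23) le21 le32.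
have -> : (n == 1%N) = (n <= 1)%N by lia.
have -> : (2 <= n)%N = ~~ (n <= 1)%N by lia.
by case: (n <= 1)%N; case: (_ == (M, V, M)); case: (_ == (V, M, V)) => /=; congr (_, _, _); lia.
Qed.
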